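(* Let $C$ be a small category, $\mathbb{K}$ a presheaf on $C$, and $\top:1\to\mathbb{K}$ a global element. Let $\Gamma$ be a presheaf on $C$ and $\phi:\Gamma\to\mathbb{K}$ a morphism (a term $\Gamma\vdash\phi:\mathbb{K}$). Let $T$ be a type in context $\Gamma$ and $A$ a type in context $\Gamma.[\phi]$, and suppose $T$ restricted to $\Gamma.[\phi]$ is isomorphic to $A$, via mutually inverse morphisms $\alpha:A\to T$ and $\beta:T\to A$ of types over $\Gamma.[\phi]$. Then there is a type $\mathcal{T}(A,T,\phi)$ in context $\Gamma$, constructed uniformly from $(A,T,\phi,\alpha,\beta)$, such that: (1) the restriction of $\mathcal{T}(A,T,\phi)$ to $\Gamma.[\phi]$ is equal (strictly, as a presheaf) to $A$; (2) there is an isomorphism $\alpha':\mathcal{T}(A,T,\phi)\to T$, $\beta':T\to\mathcal{T}(A,T,\phi)$ of types over $\Gamma$ whose restrictions to $\Gamma.[\phi]$ are exactly $\alpha$ and $\beta$ respectively; (3) for every morphism $\rho:\Delta\to\Gamma$ of presheaves, the reindexing satisfies $\mathcal{T}(A,T,\phi)\rho=\mathcal{T}(A\rho,T\rho,\phi\rho)$ (where $\alpha,\beta$ are reindexed along the induced map $\Delta.[\phi\rho]\to\Gamma.[\phi]$).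
   Context: A type in context $\Gamma$ (a presheaf on $C$) is a presheaf on the category of elements $\int\Gamma$ (objects $(c,\gamma)$ with $\gamma\in\Gamma(c)$); reindexing along $\rho:\Delta\to\Gamma$ is precomposition with the induced functor $\int\Delta\to\int\Gamma$. For a type $A$ over $\Gamma$, $\Gamma.A$ is the presheaf $c\mapsto\{(\gamma,a)\mid\gamma\in\Gamma(c),a\in A(c,\gamma)\}$. $[\phi]$ denotes the type over $\Gamma$ with $[\phi](c,\gamma)=\{\star\}$ if $\phi_c(\gamma)=\top_c$ and $\emptyset$ otherwise (the identity type $\phi=\top$); so $\Gamma.[\phi]$ is the subpresheaf of $\Gamma$ where $\phi=\top$. *)

From Stdlib Require Import ProofIrrelevance FunctionalExtensionality.

Unset Implicit Arguments.

Record Category := {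
  Ob : Type;
  Hom : Ob -> Ob -> Type;
  idm : forall a, Hom a a;
  comp : forall a b c, Hom b c -> Hom a b -> Hom a c;
  comp_id_l : forall a b (f : Hom a b), comp a b b (idm b) f = f;
  comp_id_r : forall a b (f : Hom a b), comp a a b f (idm a) = f;
  comp_assoc : forall a b c d (h : Hom c d) (g : Hom b c) (f : Hom a b),
      comp a c d h (comp a b c g f) = comp a b d (comp b c d h g) f
}.
Arguments idm {_} a.
Arguments comp {_ a b c} _ _.

Record Functor (C D : Category) := {
  fob : Ob C -> Ob D;
  fhom : forall a b, Hom C a b -> Hom D (fob a) (fob b);
  fid : forall a, fhom a a (idm a) = idm (fob a);
  fcomp : forall a b c (g : Hom C b c) (f : Hom C a b),
      fhom a c (comp g f) = comp (fhom b c g) (fhom a b f)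
}.
Arguments fhom {_ _} _ {a b} _.
Arguments fob {_ _} _ _.
Arguments fid {_ _} _ a.
Arguments fcomp {_ _} _ {a b c} g f.
Arguments comp_id_l {_ a b} f.
Arguments comp_id_r {_ a b} f.
Arguments comp_assoc {_ a b c d} h g f.

Record Psh (C : Category) := {
  pobj : Ob C -> Type;
  pact : forall c d, Hom C d c -> pobj c -> pobj d;
  pact_id : forall c (x : pobj c), pact c c (idm c) x = x;
  pact_comp : forall c d e (f : Hom C d c) (g : Hom C e d) (x : pobj c),
      pact c e (comp f g) x = pact d e g (pact c d f x)
}.
Arguments pobj {_} _ _.
Arguments pact {_} _ {c d} _ _.
Arguments pact_id {_} _ {c} x.
Arguments pact_comp {_} _ {c d e} f g x.
Arguments Build_Psh {C} pobj pact pact_id pact_comp.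

Record NatTrans (C : Category) (X Y : Psh C) := {
  nt : forall c, pobj X c -> pobj Y c;
  nt_nat : forall c d (f : Hom C d c) (x : pobj X c),
      nt d (pact X f x) = pact Y f (nt c x)
}.
Arguments nt {_ _ _} _ c _.
Arguments NatTrans {C} X Y.
Arguments nt_nat {_ _ _} _ {c d} f x.
Arguments Build_NatTrans {C X Y} nt nt_nat.

Definition ntcomp {C : Category} {X Y Z : Psh C}
  (f : NatTrans X Y) (g : NatTrans Y Z) : NatTrans X Z.
Proof.
  refine (@Build_NatTrans C X Z (fun c x => nt g c (nt f c x)) _).
  intros c d h x. rewrite (nt_nat f), (nt_nat g). reflexivity.
Defined.

Definition Psh1 (C : Category) : Psh C.
Proof.
  refine {| pobj := fun _ => unit; pact := fun _ _ _ x => x |};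
  reflexivity.
Defined.

Definition ElHom {C : Category} (G : Psh C)
  (x y : {c : Ob C & pobj G c}) : Type :=
  { f : Hom C (projT1 x) (projT1 y) | pact G f (projT2 y) = projT2 x }.

Lemma ElHom_eq {C : Category} (G : Psh C) x y (f g : ElHom G x y) :
  proj1_sig f = proj1_sig g -> f = g.
Proof.
  destruct f as [f p], g as [g q]; simpl; intros e; subst g.
  f_equal; apply proof_irrelevance.
Qed.

Definition El_comp {C : Category} (G : Psh C) x y z
  (g : ElHom G y z) (f : ElHom G x y) : ElHom G x z.
Proof.
  refine (exist _ (comp (proj1_sig g) (proj1_sig f)) _).
  destruct g as [g pg], f as [f pf]; simpl.
  rewrite (pact_comp G), pg, pf. reflexivity.
Defined.

Definition Elements {C : Category} (G : Psh C) : Category.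
Proof.
  refine {| Ob := {c : Ob C & pobj G c};
            Hom := ElHom G;
            idm := fun x => exist _ (idm (projT1 x)) (pact_id G (projT2 x));
            comp := El_comp G |}.
  - intros; apply ElHom_eq; simpl; apply comp_id_l.
  - intros; apply ElHom_eq; simpl; apply comp_id_r.
  - intros; apply ElHom_eq; simpl; apply comp_assoc.
Defined.

Definition precomp {C D : Category} (P : Psh D) (F : Functor C D) : Psh C.
Proof.
  refine {| pobj := fun c => pobj P (fob F c);
            pact := fun c d f x => pact P (fhom F f) x |}.
  - intros c x; simpl. rewrite (fid F). apply pact_id.
  - intros c d e f g x; simpl. rewrite (fcomp F). apply pact_comp.
Defined.

Definition el_fob {C : Category} {D G : Psh C} (rho : NatTrans D G)
  (x : {c : Ob C & pobj D c}) : {c : Ob C & pobj G c} :=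
  existT _ (projT1 x) (nt rho _ (projT2 x)).

Definition el_fhom {C : Category} {D G : Psh C} (rho : NatTrans D G) x y
  (f : ElHom D x y) : ElHom G (el_fob rho x) (el_fob rho y).
Proof.
  refine (exist _ (proj1_sig f) _).
  destruct f as [f pf]; simpl. rewrite <- (nt_nat rho), pf. reflexivity.
Defined.

Definition el_fun {C : Category} {D G : Psh C} (rho : NatTrans D G) :
  Functor (Elements D) (Elements G).
Proof.
  refine (@Build_Functor (Elements D) (Elements G) (el_fob rho) (el_fhom rho) _ _).
  - intros; apply ElHom_eq; reflexivity.
  - intros; apply ElHom_eq; reflexivity.
Defined.

Definition Ty {C : Category} (G : Psh C) : Type := Psh (Elements G).

Definition reindex {C : Category} {D G : Psh C} (rho : NatTrans D G)
  (A : Ty G) : Ty D := precomp A (el_fun rho).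

Definition ext_hom {C : Category} (G : Psh C) c d (f : Hom C d c)
  (g : pobj G c) : ElHom G (existT _ d (pact G f g)) (existT _ c g) :=
  exist _ f eq_refl.
Arguments ext_hom {C} G {c d} f g.

Definition ctx_ext {C : Category} (G : Psh C) (A : Ty G) : Psh C.
Proof.
  refine {| pobj := fun c => {g : pobj G c & pobj A (existT _ c g)};
            pact := fun c d f x =>
              existT _ (pact G f (projT1 x))
                     (pact A (ext_hom G f (projT1 x)) (projT2 x)) |}.
  - intros c [g a]; simpl.
    assert (H : forall g' (p : pact G (idm c) g = g'), g' = g ->
               existT (fun g0 => pobj A (existT _ c g0)) g'
                 (pact A (exist (fun f : Hom C c c => pact G f g = g')
                              (idm c) p : ElHom G (existT _ c g') (existT _ c g)) a)
               = existT _ g a).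
    { intros g' p e. revert p. rewrite e. intro p.
      replace (exist (fun f : Hom C c c => pact G f g = g) (idm c) p)
        with (@idm (Elements G) (existT _ c g))
        by (apply ElHom_eq; reflexivity).
      rewrite (pact_id A). reflexivity. }
    apply H. apply pact_id.
  - intros c d e f h [g a]; simpl.
    assert (H : forall g' (p : pact G (comp f h) g = g'),
               g' = pact G h (pact G f g) ->
               existT (fun g0 => pobj A (existT _ e g0)) g'
                 (pact A (exist (fun k : Hom C e c => pact G k g = g')
                              (comp f h) p : ElHom G (existT _ e g') (existT _ c g)) a)
               = existT _ (pact G h (pact G f g))
                   (pact A (ext_hom G h (pact G f g))
                      (pact A (ext_hom G f g) a))).
    { intros g' p q. revert p. rewrite q. intro p.
      rewrite <- (pact_comp A).
      f_equal. f_equal. apply (@ElHom_eq C G (existT _ e (pact G h (pact G f g))) (existT _ c g)). reflexivity. }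
    apply H. apply pact_comp.
Defined.

Definition ctx_proj {C : Category} (G : Psh C) (A : Ty G) :
  NatTrans (ctx_ext G A) G.
Proof.
  refine (@Build_NatTrans C (ctx_ext G A) G (fun c x => projT1 x) _). reflexivity.
Defined.

(** * The cofibration-style type [phi] (identity type phi = top) *)
Section Cof.
Context {C : Category} (K : Psh C) (top : NatTrans (Psh1 C) K).

Definition cof_obj {G : Psh C} (phi : NatTrans G K)
  (x : {c : Ob C & pobj G c}) : Prop :=
  nt phi (projT1 x) (projT2 x) = nt top (projT1 x) tt.

Definition cof_act {G : Psh C} (phi : NatTrans G K)
  (x y : {c : Ob C & pobj G c}) (f : ElHom G y x) (h : cof_obj phi x) :
  cof_obj phi y.
Proof.
  destruct x as [c g], y as [d g'], f as [f pf]; unfold cof_obj in *; simpl in *.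
  subst g'. rewrite (nt_nat phi), h.
  exact (eq_sym (nt_nat top f tt)).
Defined.

Definition cof {G : Psh C} (phi : NatTrans G K) : Ty G.
Proof.
  refine (@Build_Psh (Elements G) (cof_obj phi) (cof_act phi) _ _).
  - intros; apply proof_irrelevance.
  - intros; apply proof_irrelevance.
Defined.

Definition ext_cof {G : Psh C} (phi : NatTrans G K) : Psh C :=
  ctx_ext G (cof phi).

Definition restr {G : Psh C} (phi : NatTrans G K) (T : Ty G) : Ty (ext_cof phi) :=
  reindex (ctx_proj G (cof phi)) T.

Definition reindex_nt {D G : Psh C} (rho : NatTrans D G) {A B : Ty G}
  (f : NatTrans A B) : NatTrans (reindex rho A) (reindex rho B).
Proof.
  refine (@Build_NatTrans _ (reindex rho A) (reindex rho B)
    (fun x a => nt f (fob (el_fun rho) x) a) _).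
  intros x y h a. simpl. apply (nt_nat f).
Defined.

Definition cof_sub {D G : Psh C} (rho : NatTrans D G) (phi : NatTrans G K) :
  NatTrans (ext_cof (ntcomp rho phi)) (ext_cof phi).
Proof.
  refine (@Build_NatTrans C (ext_cof (ntcomp rho phi)) (ext_cof phi)
    (fun c x => existT _ (nt rho c (projT1 x)) (projT2 x)) _).
  intros c d f [g h]; simpl.
  assert (H : forall g1 g2 (e : g1 = g2)
               (h1 : cof_obj phi (existT _ d g1))
               (h2 : cof_obj phi (existT _ d g2)),
             existT (fun g0 => cof_obj phi (existT _ d g0)) g1 h1
             = existT (fun g0 => cof_obj phi (existT _ d g0)) g2 h2).
  { intros g1 g2 e h1 h2. subst g2. f_equal. apply proof_irrelevance. }
  apply H. apply (nt_nat rho).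
Defined.

Definition reindex_alpha {D G : Psh C} (rho : NatTrans D G)
  (phi : NatTrans G K) {T : Ty G} {A : Ty (ext_cof phi)}
  (a : NatTrans A (restr phi T)) :
  NatTrans (reindex (cof_sub rho phi) A) (restr (ntcomp rho phi) (reindex rho T)).
Proof.
  refine (@Build_NatTrans _ (reindex (cof_sub rho phi) A) (restr (ntcomp rho phi) (reindex rho T))
    (fun x u => nt a (fob (el_fun (cof_sub rho phi)) x) u) _).
  intros x y h u. simpl. rewrite (nt_nat a). simpl.
  f_equal. apply ElHom_eq. reflexivity.
Defined.

Definition reindex_beta {D G : Psh C} (rho : NatTrans D G)
  (phi : NatTrans G K) {T : Ty G} {A : Ty (ext_cof phi)}
  (b : NatTrans (restr phi T) A) :
  NatTrans (restr (ntcomp rho phi) (reindex rho T)) (reindex (cof_sub rho phi) A).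
Proof.
  refine (@Build_NatTrans _ (restr (ntcomp rho phi) (reindex rho T)) (reindex (cof_sub rho phi) A)
    (fun x u => nt b (fob (el_fun (cof_sub rho phi)) x) u) _).
  intros x y h u. simpl. rewrite <- (nt_nat b). simpl.
  f_equal. f_equal. apply ElHom_eq. reflexivity.
Defined.

End Cof.

Definition is_iso {C : Category} {X Y : Psh C} (a : NatTrans X Y)
  (b : NatTrans Y X) : Prop :=
  (forall c x, nt b c (nt a c x) = x) /\ (forall c y, nt a c (nt b c y) = y).

From Stdlib Require Import ProofIrrelevance FunctionalExtensionality ClassicalEpsilon.

(* Classically every point of [Gamma] either lies in [Gamma.[phi]] or not, so
   the type is glued fibrewise: the fibre of [A] over points of [Gamma.[phi]],
   the fibre of [T] elsewhere.  Restrictions never lead out of [Gamma.[phi]],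
   since [phi = top] is stable under restriction; a restriction leading into
   it is the restriction of [T] followed by [beta].  The glued type restricts
   to [A] on the nose, [alpha] and [beta] extend by the identity off
   [Gamma.[phi]] (naturality of the extension of [alpha] is where
   [alpha \o beta = id] is used), and gluing commutes with reindexing because
   [phi rho] holds at [x] exactly when [phi] holds at [rho x].  When
   [(alpha, beta)] is not an isomorphism the construction returns [T]. *)

Definition cast {X Y : Type} (e : X = Y) (a : X) : Y := eq_rect X (fun Z => Z) a Y e.

Lemma cast_id {X : Type} (e : X = X) (a : X) : cast e a = a.
Proof. now rewrite (proof_irrelevance _ e eq_refl). Qed.

Lemma existT_prop_eq {I : Type} (P : I -> Prop) (i j : I) (p : P i) (q : P j) :
  i = j -> existT P i p = existT P j q.
Proof. intros <-. f_equal. apply proof_irrelevance. Qed.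

Lemma Psh_ext {C : Category} (P Q : Psh C) (e : forall c, pobj P c = pobj Q c) :
  (forall c d (f : Hom C d c) a, cast (e d) (pact P f a) = pact Q f (cast (e c) a)) ->
  P = Q.
Proof.
  destruct P as [o1 a1 i1 c1], Q as [o2 a2 i2 c2]; simpl in *; intros H.
  assert (Eo : o1 = o2) by (apply functional_extensionality_dep; exact e).
  subst o2.
  assert (Ea : a1 = a2).
  { do 4 (apply functional_extensionality_dep; intros ?).
    match goal with |- a1 ?c ?d ?f ?a = _ => specialize (H c d f a) end.
    now rewrite !cast_id in H. }
  subst a2. f_equal; apply proof_irrelevance.
Qed.

Lemma NatTrans_ext {C : Category} {X Y : Psh C} (n m : NatTrans X Y) :
  (forall c x, nt n c x = nt m c x) -> n = m.
Proof.
  destruct n as [f p], m as [g q]; simpl; intros H.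
  assert (f = g).
  { apply functional_extensionality_dep; intro c; apply functional_extensionality, H. }
  subst g. f_equal; apply proof_irrelevance.
Qed.

Lemma nt_eq_rect_src {C : Category} {P Q Y : Psh C} (E : P = Q)
  (e : forall c, pobj P c = pobj Q c) (n : NatTrans P Y) c a :
  nt (eq_rect P (fun X => NatTrans X Y) n Q E) c a = nt n c (cast (eq_sym (e c)) a).
Proof. destruct E. now rewrite cast_id. Qed.

Lemma nt_eq_rect_tgt {C : Category} {P Q Y : Psh C} (E : P = Q)
  (e : forall c, pobj P c = pobj Q c) (n : NatTrans Y P) c a :
  nt (eq_rect P (fun X => NatTrans Y X) n Q E) c a = cast (e c) (nt n c a).
Proof. destruct E. now rewrite cast_id. Qed.

Definition nt_id {C : Category} (X : Psh C) : NatTrans X X :=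
  Build_NatTrans (fun c x => x) (fun c d f x => eq_refl).

Section Glue.
Context {C : Category} (K : Psh C) (top : NatTrans (Psh1 C) K).

Definition cof_dec {G : Psh C} (phi : NatTrans G K) c (g : pobj G c) : Type :=
  {cof_obj K top phi (existT _ c g)} + {~ cof_obj K top phi (existT _ c g)}.

Definition cof_decide {G : Psh C} (phi : NatTrans G K) c g : cof_dec phi c g :=
  excluded_middle_informative _.

Lemma reindex_is_iso {D G : Psh C} (rho : NatTrans D G) (phi : NatTrans G K)
  {T : Ty G} {A : Ty (ext_cof K top phi)}
  (alpha : NatTrans A (restr K top phi T)) (beta : NatTrans (restr K top phi T) A) :
  is_iso alpha beta ->
  is_iso (reindex_alpha K top rho phi alpha) (reindex_beta K top rho phi beta).
Proof.
  intros [ba ab]; split; intros x a.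
  - exact (ba (el_fob (cof_sub K top rho phi) x) a).
  - exact (ab (el_fob (cof_sub K top rho phi) x) a).
Qed.

Section Fibres.
Context {G : Psh C} (phi : NatTrans G K) (T : Ty G) (A : Ty (ext_cof K top phi)).

Definition ext_pt c (g : pobj G c) (p : cof_obj K top phi (existT _ c g)) :
  Ob (Elements (ext_cof K top phi)) := existT _ c (existT _ g p).

Definition ext_pt_hom c g d g' (f : ElHom G (existT _ d g') (existT _ c g)) px py :
  Hom (Elements (ext_cof K top phi)) (ext_pt d g' py) (ext_pt c g px).
Proof.
  refine (exist _ (proj1_sig f) _).
  apply (existT_prop_eq (fun g0 => cof_obj K top phi (existT _ d g0))), (proj2_sig f).
Defined.

Definition glue_fib c g (s : cof_dec phi c g) : Type :=
  match s with
  | left p => pobj A (ext_pt c g p)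
  | right _ => pobj T (existT _ c g)
  end.

Definition glue_fib_in c g p (s : cof_dec phi c g) : glue_fib c g s = pobj A (ext_pt c g p).
Proof.
  destruct s as [p'|n]; [|contradiction].
  now rewrite (proof_irrelevance _ p' p).
Defined.

Variable beta : NatTrans (restr K top phi T) A.

Definition glue_act c g d g' (f : ElHom G (existT _ d g') (existT _ c g))
  (sx : cof_dec phi c g) (sy : cof_dec phi d g') : glue_fib c g sx -> glue_fib d g' sy :=
  match sx as sx0, sy as sy0 return glue_fib c g sx0 -> glue_fib d g' sy0 with
  | left px, left py => pact A (ext_pt_hom c g d g' f px py)
  | left px, right ny => fun _ => False_rect _ (ny (cof_act K top phi _ _ f px))
  | right _, left py => fun a => nt beta (ext_pt d g' py) (pact T f a)
  | right _, right _ => pact T f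
  end.

Lemma glue_act_id c g s a :
  glue_act c g c g (@idm (Elements G) (existT _ c g)) s s a = a.
Proof.
  destruct s as [p|n]; simpl.
  - rewrite <- (pact_id A a) at 2. f_equal. now apply ElHom_eq.
  - exact (pact_id T (c := existT _ c g) a).
Qed.

Lemma glue_act_comp c g d g' e g'' (f : ElHom G (existT _ d g') (existT _ c g))
  (h : ElHom G (existT _ e g'') (existT _ d g')) sx sy sz a :
  glue_act c g e g'' (@comp (Elements G) _ _ _ f h) sx sz a
  = glue_act d g' e g'' h sy sz (glue_act c g d g' f sx sy a).
Proof.
  destruct sx as [px|nx], sy as [py|ny], sz as [pz|nz]; simpl;
    try solve [exfalso; apply ny, (cof_act K top phi _ _ f px)
              |exfalso; apply nz, (cof_act K top phi _ _ h py)].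
  - rewrite <- (pact_comp A). f_equal. now apply ElHom_eq.
  - rewrite <- (nt_nat beta). simpl. f_equal.
    etransitivity; [exact (pact_comp T f h a)|]. f_equal. now apply ElHom_eq.
  - f_equal. exact (pact_comp T f h a).
  - exact (pact_comp T f h a).
Qed.

Definition glue : Ty G.
Proof.
  refine (@Build_Psh (Elements G)
    (fun x => glue_fib (projT1 x) (projT2 x) (cof_decide phi _ _))
    (fun x y f => glue_act (projT1 x) (projT2 x) (projT1 y) (projT2 y) f _ _) _ _).
  - intros [c g] a. apply glue_act_id.
  - intros [c g] [d g'] [e g''] f h a. apply glue_act_comp.
Defined.

Definition glue_in c g (s : cof_dec phi c g) : pobj T (existT _ c g) -> glue_fib c g s :=
  match s with
  | left p' => nt beta (ext_pt c g p')
  | right _ => fun a => a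
  end.

Lemma glue_in_nat c g d g' (f : ElHom G (existT _ d g') (existT _ c g)) sx sy a :
  glue_in d g' sy (pact T f a) = glue_act c g d g' f sx sy (glue_in c g sx a).
Proof.
  destruct sx as [px|nx], sy as [py|ny]; simpl; try reflexivity.
  - etransitivity; [|exact (nt_nat beta (ext_pt_hom c g d g' f px py) a)].
    simpl. do 2 f_equal. now apply ElHom_eq.
  - exfalso; apply ny, (cof_act K top phi _ _ f px).
Qed.

Definition glue_from : NatTrans T glue.
Proof.
  refine (@Build_NatTrans _ T glue
    (fun x => match x with existT _ c g => glue_in c g _ end) _).
  intros [c g] [d g'] f a. apply glue_in_nat.
Defined.

Definition restr_glue_fib x : pobj (restr K top phi glue) x = pobj A x.
Proof. destruct x as [c [g p]]. exact (glue_fib_in c g p _). Defined.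

Lemma restr_glue_act c g p d g' q
  (f : Hom (Elements (ext_cof K top phi)) (ext_pt d g' q) (ext_pt c g p)) sx sy a :
  cast (glue_fib_in d g' q sy)
    (glue_act c g d g' (el_fhom (ctx_proj G (cof K top phi)) _ _ f) sx sy a)
  = pact A f (cast (glue_fib_in c g p sx) a).
Proof.
  destruct sx as [p'|], sy as [q'|]; try contradiction.
  assert (p' = p) by apply proof_irrelevance; subst p'.
  assert (q' = q) by apply proof_irrelevance; subst q'. simpl.
  rewrite !cast_id. f_equal. now apply ElHom_eq.
Qed.

Lemma restr_glue : restr K top phi glue = A.
Proof.
  apply (Psh_ext _ _ restr_glue_fib).
  intros [c [g p]] [d [g' q]] f a. apply restr_glue_act.
Qed.

Lemma restr_glue_from :
  eq_rect _ (fun X => NatTrans (restr K top phi T) X)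
    (reindex_nt (ctx_proj G (cof K top phi)) glue_from) A restr_glue = beta.
Proof.
  apply NatTrans_ext; intros [c [g p]] a.
  rewrite (nt_eq_rect_tgt restr_glue restr_glue_fib); simpl.
  destruct (cof_decide phi c g) as [p'|]; [|contradiction].
  assert (p' = p) by apply proof_irrelevance; subst p'. simpl. apply cast_id.
Qed.

Variable alpha : NatTrans A (restr K top phi T).
Hypothesis alpha_beta_iso : is_iso alpha beta.

Definition glue_out c g (s : cof_dec phi c g) : glue_fib c g s -> pobj T (existT _ c g) :=
  match s with
  | left p => nt alpha (ext_pt c g p)
  | right _ => fun a => a
  end.

Lemma glue_out_nat c g d g' (f : ElHom G (existT _ d g') (existT _ c g)) sx sy a :
  glue_out d g' sy (glue_act c g d g' f sx sy a) = pact T f (glue_out c g sx a).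
Proof.
  destruct sx as [px|nx], sy as [py|ny]; simpl; try reflexivity.
  - etransitivity; [exact (nt_nat alpha (ext_pt_hom c g d g' f px py) a)|].
    simpl. f_equal. now apply ElHom_eq.
  - exfalso; apply ny, (cof_act K top phi _ _ f px).
  - exact (proj2 alpha_beta_iso (ext_pt d g' py) (pact T f a)).
Qed.

Definition glue_to : NatTrans glue T.
Proof.
  refine (@Build_NatTrans _ glue T
    (fun x => match x with existT _ c g => glue_out c g _ end) _).
  intros [c g] [d g'] f a. apply glue_out_nat.
Defined.

Lemma glue_to_from_iso : is_iso glue_to glue_from.
Proof.
  destruct alpha_beta_iso as [ba ab].
  split; intros [c g]; simpl; destruct (cof_decide phi c g) as [p|]; intros a; simpl;
    try reflexivity; [apply (ba (ext_pt c g p)) | apply (ab (ext_pt c g p))].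
Qed.

Lemma restr_glue_to :
  eq_rect _ (fun X => NatTrans X (restr K top phi T))
    (reindex_nt (ctx_proj G (cof K top phi)) glue_to) A restr_glue = alpha.
Proof.
  apply NatTrans_ext; intros [c [g p]] a.
  rewrite (nt_eq_rect_src restr_glue restr_glue_fib); simpl.
  destruct (cof_decide phi c g) as [p'|]; [|contradiction].
  assert (p' = p) by apply proof_irrelevance; subst p'. simpl. now rewrite cast_id.
Qed.

End Fibres.

Lemma reindex_glue_act {D G : Psh C} (rho : NatTrans D G) (phi : NatTrans G K)
  (T : Ty G) (A : Ty (ext_cof K top phi)) (beta : NatTrans (restr K top phi T) A)
  c g d g' (f : ElHom D (existT _ d g') (existT _ c g))
  (sx : cof_dec (ntcomp rho phi) c g) (sy : cof_dec (ntcomp rho phi) d g') a :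
  glue_act phi T A beta c (nt rho c g) d (nt rho d g') (el_fhom rho _ _ f) sx sy a
  = glue_act (ntcomp rho phi) (reindex rho T) (reindex (cof_sub K top rho phi) A)
      (reindex_beta K top rho phi beta) c g d g' f sx sy a.
Proof.
  destruct sx as [px|], sy as [py|ny]; simpl; try reflexivity.
  - f_equal. now apply ElHom_eq.
  - exfalso; apply ny, (cof_act K top (ntcomp rho phi) _ _ f px).
Qed.

Lemma reindex_glue {D G : Psh C} (rho : NatTrans D G) (phi : NatTrans G K)
  (T : Ty G) (A : Ty (ext_cof K top phi)) (beta : NatTrans (restr K top phi T) A) :
  reindex rho (glue phi T A beta)
  = glue (ntcomp rho phi) (reindex rho T) (reindex (cof_sub K top rho phi) A)
      (reindex_beta K top rho phi beta).
Proof.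
  refine (Psh_ext (reindex rho (glue phi T A beta))
    (glue (ntcomp rho phi) (reindex rho T) (reindex (cof_sub K top rho phi) A)
       (reindex_beta K top rho phi beta)) (fun x => eq_refl) _).
  intros [c g] [d g'] f a. exact (reindex_glue_act rho phi T A beta c g d g' f _ _ a).
Qed.

Definition realign (G : Psh C) (phi : NatTrans G K) (T : Ty G) (A : Ty (ext_cof K top phi))
  (alpha : NatTrans A (restr K top phi T)) (beta : NatTrans (restr K top phi T) A) : Ty G :=
  match excluded_middle_informative (is_iso alpha beta) with
  | left _ => glue phi T A beta
  | right _ => T
  end.

Definition realign_to (G : Psh C) (phi : NatTrans G K) (T : Ty G) (A : Ty (ext_cof K top phi))
  (alpha : NatTrans A (restr K top phi T)) (beta : NatTrans (restr K top phi T) A) :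
  NatTrans (realign G phi T A alpha beta) T :=
  match excluded_middle_informative (is_iso alpha beta) as s
    return NatTrans (match s with left _ => glue phi T A beta | right _ => T end) T with
  | left H => glue_to phi T A beta alpha H
  | right _ => nt_id T
  end.

Definition realign_from (G : Psh C) (phi : NatTrans G K) (T : Ty G) (A : Ty (ext_cof K top phi))
  (alpha : NatTrans A (restr K top phi T)) (beta : NatTrans (restr K top phi T) A) :
  NatTrans T (realign G phi T A alpha beta) :=
  match excluded_middle_informative (is_iso alpha beta) as s
    return NatTrans T (match s with left _ => glue phi T A beta | right _ => T end) with
  | left _ => glue_from phi T A beta
  | right _ => nt_id T
  end.

End Glue.

Theorem mainTheorem1 (C : Category) (K : Psh C) (top : NatTrans (Psh1 C) K) :
  exists
    (F : forall (G : Psh C) (phi : NatTrans G K) (T : Ty G)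
                (A : Ty (ext_cof K top phi)),
           NatTrans A (restr K top phi T) -> NatTrans (restr K top phi T) A ->
           Ty G)
    (alpha' : forall G phi T A alpha beta,
                NatTrans (F G phi T A alpha beta) T)
    (beta' : forall G phi T A alpha beta,
                NatTrans T (F G phi T A alpha beta)),
    (forall (G : Psh C) (phi : NatTrans G K) (T : Ty G)
            (A : Ty (ext_cof K top phi))
            (alpha : NatTrans A (restr K top phi T))
            (beta : NatTrans (restr K top phi T) A),
        is_iso alpha beta ->
        (exists e : restr K top phi (F G phi T A alpha beta) = A,
            eq_rect _ (fun X => NatTrans X (restr K top phi T))
              (reindex_nt (ctx_proj G (cof K top phi)) (alpha' G phi T A alpha beta))
              A e = alpha
         /\ eq_rect _ (fun X => NatTrans (restr K top phi T) X)
              (reindex_nt (ctx_proj G (cof K top phi)) (beta' G phi T A alpha beta))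
              A e = beta)
        /\ is_iso (alpha' G phi T A alpha beta) (beta' G phi T A alpha beta)
        /\ (forall (D : Psh C) (rho : NatTrans D G),
              reindex rho (F G phi T A alpha beta)
              = F D (ntcomp rho phi) (reindex rho T)
                  (reindex (cof_sub K top rho phi) A)
                  (reindex_alpha K top rho phi alpha)
                  (reindex_beta K top rho phi beta))).
Proof.
  exists (realign K top), (realign_to K top), (realign_from K top).
  intros G phi T A alpha beta iso.
  unfold realign, realign_to, realign_from.
  destruct (excluded_middle_informative (is_iso alpha beta)) as [?|]; [|contradiction].
  split; [|split].
  - exists (restr_glue K top phi T A beta).
    split; [apply restr_glue_to | apply restr_glue_from].
  - apply glue_to_from_iso.
  - intros D rho.
    destruct (excluded_middle_informative _) as [|not_iso];
      [|contradiction (not_iso (reindex_is_iso K top rho phi alpha beta iso))].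
    apply reindex_glue.
Qed.
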